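(* Let $l\ge2$ and $a,b\in\mathbb{Z}_{2l}$ be such that $X=X(\mathbb{Z}_{2l},\{\pm a,\pm b\})$ is a $4$-regular circulant graph, and assume $a+b=l$ with $l\not\equiv0\pmod 4$. (i) If $l\equiv2\pmod4$, then $X$ admits perfect state transfer from $d^*e_x$ to $d^*e_{x+l}$ at time $l$, for every $x\in\mathbb{Z}_{2l}$. (ii) If $l$ is odd, then $X$ admits perfect state transfer from $d^*e_x$ to $d^*e_{x+l}$ at time $2l$, for every $x\in\mathbb{Z}_{2l}$. Moreover, if $X$ is connected, then these times are the minimum times at which perfect state transfer from $d^*e_x$ to $d^*e_{x+l}$ occurs.
   Context: For $S\subseteq\mathbb{Z}_n\setminus\{0\}$ with $S=-S$, $X(\mathbb{Z}_n,S)$ has vertex set $\mathbb{Z}_n$ and edges $\{x,y\}$ with $y-x\in S$. For a graph with symmetric arc set $\mathcal{A}$ ($t((x,y))=y$, $(x,y)^{-1}=(y,x)$): boundary matrix $d_{x,a}=\frac{1}{\sqrt{\deg x}}\delta_{x,t(a)}$, shift matrix $R_{a,b}=\delta_{a,b^{-1}}$, $U=R(2d^*d-I_{\mathcal{A}})$; $e_x$ is the standard unit vector. Perfect state transfer from $\Phi$ to a distinct state $\Psi$ at time $\tau\in\mathbb{Z}_{\ge1}$ means $U^\tau\Phi=\gamma\Psi$ for some $|\gamma|=1$. *)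

From HB Require Import structures.
From mathcomp Require Import all_boot all_order all_algebra all_field.
Set Implicit Arguments. Unset Strict Implicit. Unset Printing Implicit Defensive.
Import Order.TTheory GRing.Theory Num.Theory.
Local Open Scope ring_scope.

Definition conn_set (n : nat) (a b : 'Z_n) : {set 'Z_n} := [set a; -a; b; -b].

Definition arc (n : nat) (S : {set 'Z_n}) : finType :=
  {p : 'Z_n * 'Z_n | p.2 - p.1 \in S}.

Section Walk.
Variables (n : nat) (S : {set 'Z_n}).

Definition tgt (e : arc S) : 'Z_n := (val e).2.

Definition deg (x : 'Z_n) : nat := #|[set e : arc S | tgt e == x]|.

Definition dmat (x : 'Z_n) (e : arc S) : algC :=
  (sqrtC (deg x)%:R)^-1 * (x == tgt e)%:R.

Definition Rmat (e f : arc S) : algC :=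
  (val e == ((val f).2, (val f).1))%:R.

(* U = R (2 d^* d - I) *)
Definition Umat (e f : arc S) : algC :=
  \sum_(g : arc S) Rmat e g *
     (2 * (\sum_(x : 'Z_n) (dmat x g)^* * dmat x f) - (g == f)%:R).

Definition Uact (v : {ffun arc S -> algC}) : {ffun arc S -> algC} :=
  [ffun e => \sum_(f : arc S) Umat e f * v f].

Definition dstar_e (x : 'Z_n) : {ffun arc S -> algC} :=
  [ffun e => (dmat x e)^*].

Definition PST (Phi Psi : {ffun arc S -> algC}) (tau : nat) : Prop :=
  Phi <> Psi /\ (1 <= tau)%N /\
  exists gamma : algC, `|gamma| = 1 /\ iter tau Uact Phi = [ffun e => gamma * Psi e].

Definition circ_connected : Prop :=
  forall x y : 'Z_n, connect (fun u v : 'Z_n => v - u \in S) x y.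

End Walk.

From Pilot Require Import Defs.
From HB Require Import structures.
From mathcomp Require Import all_boot all_order all_algebra all_field.
From mathcomp Require Import ring zify.
Set Implicit Arguments.
Unset Strict Implicit.
Unset Printing Implicit Defensive.
Import Order.TTheory GRing.Theory Num.Theory.
Local Open Scope ring_scope.

(* On functions phi(u, w) of the arcs, the Grover walk acts as
   (U phi)(u, w) = 2/|S| sum_(s in S) phi(u - s, u) - phi(w, u).
   For S = {a, -a, b, -b} with a + b = l in Z_2l, every s in S has 2s = 2a or
   2s = -2a, and S + l = S.  This makes U^t d^* e_x explicit ([amp]): a front
   1/4 [2(w - x) = 2t(w - u)] running in both directions, plus a dipole
   +-1/4 ([w = x] - [w = x + l]) which moves from the heads to the tails of
   the arcs and back with period 4.  When t = 2 (mod 4) and 2ta = 0 the two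
   parts add up to 1/2 [w = x + l], which is d^* e_(x+l).  Conversely, the
   amplitude on the arc from x + l - a to x + l has modulus 1/2 only under these
   two conditions; and if the graph is connected, then 2z lies in the subgroup
   generated by 2a for every vertex z, so 2ta = 0 forces l | t. *)

(* Not [path.arc]. *)
Local Notation arc := Defs.arc.

Section CirculantWalk.
Variables (n : nat) (S : {set 'Z_n}).

Definition arcfun (phi : 'Z_n -> 'Z_n -> algC) : {ffun arc S -> algC} :=
  [ffun e => phi (val e).1 (val e).2].

Lemma eq_arcfun (phi psi : 'Z_n -> 'Z_n -> algC) :
  (forall u w, w - u \in S -> phi u w = psi u w) -> arcfun phi = arcfun psi.
Proof. by move=> eq_phi; apply/ffunP => e; rewrite !ffunE eq_phi //; exact: (valP e). Qed.

Lemma big_arc_cond (R : nmodType) (P : pred ('Z_n * 'Z_n)) (F : 'Z_n * 'Z_n -> R) :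
  \sum_(e : arc S | P (val e)) F (val e) = \sum_(p | (p.2 - p.1 \in S) && P p) F p.
Proof. by rewrite (big_sub_cond (fun p : 'Z_n * 'Z_n => p.2 - p.1 \in S)). Qed.

Lemma big_arc_into (R : nmodType) (z : 'Z_n) (F : 'Z_n -> 'Z_n -> R) :
  \sum_(e : arc S | tgt e == z) F (val e).1 (val e).2 = \sum_(s in S) F (z - s) z.
Proof.
rewrite (big_arc_cond (fun p => p.2 == z) (fun p => F p.1 p.2)).
rewrite -(pair_big_dep xpredT (fun v w => (w - v \in S) && (w == z)) F) /=.
rewrite (reindex_inj (can_inj (subKr z))) [RHS]big_mkcond /=.
by apply: eq_bigr => s _; rewrite big_andbC big_mkcondr big_pred1_eq subKr.
Qed.

Lemma deg_circulant (z : 'Z_n) : deg S z = #|S|.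
Proof.
rewrite /deg -sum1_card (eq_bigl (fun e => tgt e == z)) => [|e]; last by rewrite inE.
rewrite -[RHS]sum1_card; exact: (big_arc_into z (fun _ _ => 1%N)).
Qed.

Lemma dmatE (x : 'Z_n) (e : arc S) : dmat x e = (sqrtC #|S|%:R)^-1 * (x == tgt e)%:R.
Proof. by rewrite /dmat deg_circulant. Qed.

Lemma conj_dmat (x : 'Z_n) (e : arc S) : (dmat x e)^* = dmat x e.
Proof. by rewrite geC0_conj // dmatE mulr_ge0 ?invr_ge0 ?sqrtC_ge0 ?ler0n. Qed.

Lemma gram_dmat (g f : arc S) :
  \sum_(x : 'Z_n) (dmat x g)^* * dmat x f = #|S|%:R^-1 * (tgt g == tgt f)%:R.
Proof.
under eq_bigr do rewrite conj_dmat !dmatE.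
rewrite (bigD1 (tgt g)) //= big1 => [|x /negbTE ->]; last by rewrite mulr0 mul0r.
by rewrite eqxx addr0 mulr1 mulrA -expr2 exprVn sqrtCK.
Qed.

Lemma dstar_eE (x : 'Z_n) :
  dstar_e S x = arcfun (fun u w => (sqrtC #|S|%:R)^-1 * (w == x)%:R).
Proof. by apply/ffunP => e; rewrite !ffunE conj_dmat dmatE eq_sym. Qed.

Lemma dstar_e_inj : S != set0 -> injective (dstar_e S).
Proof.
case/set0Pn => s Ss x y /ffunP dxy.
have sx : x - (x - s) \in S by rewrite subKr.
move: (dxy (Sub (x - s, x) sx)); rewrite !dstar_eE !ffunE /= eqxx mulr1.
case: (x =P y) => // _; rewrite mulr0 => /eqP.
by rewrite invr_eq0 sqrtC_eq0 pnatr_eq0 cards_eq0 => /eqP S0; rewrite S0 inE in Ss.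
Qed.

Definition walk_step (phi : 'Z_n -> 'Z_n -> algC) (u w : 'Z_n) : algC :=
  2 / #|S|%:R * \sum_(s in S) phi (u - s) u - phi w u.

Lemma walk_stepZD (c d : algC) (f g : 'Z_n -> 'Z_n -> algC) (u w : 'Z_n) :
  walk_step (fun u w => c * (f u w + d * g u w)) u w =
  c * (walk_step f u w + d * walk_step g u w).
Proof.
rewrite /walk_step; under eq_bigr do rewrite mulrDr mulrA.
by rewrite big_split -!mulr_sumr /=; ring.
Qed.

Hypothesis S_sym : forall s, s \in S -> - s \in S.

Lemma sum_arc_delta (q : 'Z_n * 'Z_n) (F : 'Z_n * 'Z_n -> algC) :
  q.2 - q.1 \in S -> \sum_(f : arc S) (q == val f)%:R * F (val f) = F q.
Proof.
move=> Sq; rewrite (big_arc_cond xpredT (fun p => (q == p)%:R * F p)).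
under eq_bigr do rewrite mulr_natl mulrb.
rewrite -big_mkcondr (big_pred1 q) // => p /=.
by case: (p =P q) => [->|/eqP/negbTE np]; rewrite ?eqxx ?Sq // eq_sym np andbF.
Qed.

Lemma RmatE (e g : arc S) : Rmat e g = (((val e).2, (val e).1) == val g)%:R.
Proof.
rewrite /Rmat; case: (val e) (val g) => [u w] [v z] /=.
by rewrite !xpair_eqE andbC (eq_sym u) (eq_sym w).
Qed.

Lemma UmatE (e f : arc S) :
  Umat e f = 2 / #|S|%:R * ((val e).1 == tgt f)%:R - (((val e).2, (val e).1) == val f)%:R.
Proof.
rewrite /Umat; under eq_bigr do rewrite gram_dmat RmatE mulrA.
apply: (sum_arc_delta (fun p => 2 / #|S|%:R * (p.2 == tgt f)%:R - (p == val f)%:R)).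
by rewrite /= -opprB S_sym //; exact: (valP e).
Qed.

Lemma Uact_arcfun (phi : 'Z_n -> 'Z_n -> algC) :
  Uact (arcfun phi) = arcfun (walk_step phi).
Proof.
apply/ffunP => e; rewrite !ffunE /walk_step.
under eq_bigr do rewrite UmatE ffunE mulrBl.
rewrite sumrB (sum_arc_delta (fun p => phi p.1 p.2)); last first.
  by rewrite /= -opprB S_sym //; exact: (valP e).
congr (_ - _); rewrite -big_arc_into mulr_sumr [RHS]big_mkcond.
by apply: eq_bigr => f _; rewrite eq_sym; case: eqP; rewrite ?mulr1 ?mulr0 ?mul0r.
Qed.

End CirculantWalk.

Section AntipodalTransfer.
Variables (l : nat) (a b : 'Z_(2 * l)).
Hypotheses (l_gt0 : (0 < l)%N) (card_S : #|conn_set a b| = 4%N) (ab_L : a + b = l%:R).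

Local Notation Z := 'Z_(2 * l).
Local Notation L := (l%:R : 'Z_(2 * l)).
Local Notation S := (conn_set a b).
Local Notation A := (a *+ 2).

Lemma lt_l_2l : (l < 2 * l)%N.
Proof. exact: ltn_Pmull. Qed.

Lemma Zp2l_gt1 : (1 < 2 * l)%N.
Proof. exact: leq_ltn_trans l_gt0 lt_l_2l. Qed.

Lemma Zp2l_natr_eq0 (m : nat) : (m%:R == 0 :> Z) = (2 * l %| m)%N.
Proof. by rewrite -val_eqE /= val_Zp_nat ?Zp2l_gt1. Qed.

Lemma Zp2l_mulrn_eq0 (y : Z) : y *+ (2 * l) = 0.
Proof. by rewrite -mulr_natr pchar_Zp ?mulr0 ?Zp2l_gt1. Qed.

Lemma val_antipode : val L = l.
Proof. by rewrite /= val_Zp_nat ?Zp2l_gt1 // modn_small // lt_l_2l. Qed.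

Lemma addLL : L + L = 0.
Proof. by apply/eqP; rewrite -natrD Zp2l_natr_eq0 addnn -mul2n. Qed.

Lemma oppL : - L = L.
Proof. by apply/eqP; rewrite eq_sym -addr_eq0 addLL. Qed.

Lemma eq_addL (x : Z) : (x == x + L) = false.
Proof.
rewrite -{1}(addr0 x) (inj_eq (addrI x)) eq_sym.
by rewrite Zp2l_natr_eq0; apply/negbTE/negP => /(dvdn_leq l_gt0); rewrite leqNgt lt_l_2l.
Qed.

Lemma Zp2l_val_lt (y : Z) : (y < 2 * l)%N.
Proof. by case: y => v /=; rewrite Zp_cast ?Zp2l_gt1. Qed.

Lemma double_eq0 (y : Z) : (y *+ 2 == 0) = (y == 0) || (y == L).
Proof.
rewrite -[y in LHS]natr_Zp -mulrnA Zp2l_natr_eq0 [(y * 2)%N]mulnC dvdn_pmul2l //.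
rewrite -!val_eqE val_antipode /=; have y_lt := Zp2l_val_lt y.
apply/idP/idP => [/dvdnP[k y_k]|/orP[]/eqP ->]; rewrite ?dvdn0 ?dvdnn //.
have k_lt2 : (k < 2)%N by rewrite -(ltn_pmul2r l_gt0) -y_k.
by case: k k_lt2 y_k => [|[|]] // _ ->; rewrite ?mul0n ?mul1n eqxx ?orbT.
Qed.

Lemma double_sub_eq0 (x w : Z) : ((w - x) *+ 2 == 0) = (w == x) || (w == x + L).
Proof. by rewrite double_eq0 subr_eq0 subr_eq addrC. Qed.

Lemma conn_set_uniq : uniq [:: a; - a; b; - b].
Proof.
apply/card_uniqP; rewrite -[size _]/4%N -card_S.
by apply: eq_card => s; rewrite !inE !orbA.
Qed.

Lemma conn_set_neq : a != - a /\ b != - b.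
Proof. by move: conn_set_uniq; rewrite /= !inE !negb_or => /and4P[/and3P[-> _ _] _ -> _]. Qed.

Lemma sum_conn_set (F : Z -> algC) : \sum_(s in S) F s = F a + F (- a) + F b + F (- b).
Proof.
rewrite (eq_bigl (fun s => s \in [:: a; - a; b; - b])) => [|s]; last by rewrite !inE !orbA.
by rewrite -big_uniq ?conn_set_uniq // !big_cons big_nil /= addr0 !addrA.
Qed.

Lemma in_conn_set (s : Z) : (s \in S) = [|| s == a, s == - a, s == b | s == - b].
Proof. by rewrite !inE !orbA. Qed.

Lemma conn_set_sym (s : Z) : s \in S -> - s \in S.
Proof. by rewrite !in_conn_set => /or4P[] /eqP ->; rewrite ?opprK eqxx ?orbT. Qed.

Lemma b_eq : b = L - a.
Proof. by rewrite -ab_L addrC addKr. Qed.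

Lemma double_b : b *+ 2 = - A.
Proof. by rewrite b_eq mulrnBl mulr2n addLL sub0r. Qed.

Lemma double_conn_set (s : Z) : s \in S -> s *+ 2 = A \/ s *+ 2 = - A.
Proof.
rewrite in_conn_set => /or4P[] /eqP ->; rewrite ?mulNrn ?double_b ?opprK; by [left | right].
Qed.

Lemma walk_step_conn_set (phi : Z -> Z -> algC) (u w : Z) :
  walk_step S phi u w = 2^-1 * \sum_(s in S) phi (u - s) u - phi w u.
Proof. by rewrite /walk_step card_S (_ : 2 / 4%:R = 2^-1 :> algC) //; field. Qed.

Definition dipole (x v : Z) : algC := (v == x)%:R - (v == x + L)%:R.

Definition front (x : Z) (t : nat) (u w : Z) : algC := ((w - x) *+ 2 == (w - u) *+ 2 *+ t)%:R.

Definition amp (x : Z) (t : nat) (u w : Z) : algC :=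
  4^-1 * (front x t u w + (-1) ^+ t./2 * dipole x (if odd t then u else w)).

Lemma sum_conn_set_double (F : Z -> algC) :
  \sum_(s in S) F (s *+ 2) = (F A + F (- A)) *+ 2.
Proof. by rewrite sum_conn_set !mulNrn double_b opprK mulr2n; ring. Qed.

Lemma walk_step_front (x : Z) (t : nat) (u w : Z) :
  w - u \in S -> walk_step S (front x t) u w = front x t.+1 u w.
Proof.
move=> Suw; rewrite walk_step_conn_set /front.
under eq_bigr do rewrite subKr.
rewrite (sum_conn_set_double (fun z => ((u - x) *+ 2 == z *+ t)%:R)).
have -> : (u - w) *+ 2 = - ((w - u) *+ 2) by rewrite -mulNrn opprB.
have -> : (w - x) *+ 2 = (w - u) *+ 2 + (u - x) *+ 2 by rewrite -mulrnDl addrA subrK.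
move: ((u - x) *+ 2) => y.
by case: (double_conn_set Suw) => ->;
  rewrite ?opprK [_ *+ t.+1]mulrS (inj_eq (addrI _)); field.
Qed.

Lemma dipole_addL (x v : Z) : dipole x (v + L) = - dipole x v.
Proof.
have shift : (v + L == x) = (v == x + L).
  by apply/eqP/eqP => [<-|->]; rewrite -addrA addLL addr0.
by rewrite /dipole shift (inj_eq (addIr L)) opprB.
Qed.

Lemma walk_step_dipole_head (x u w : Z) :
  walk_step S (fun _ w => dipole x w) u w = dipole x u.
Proof. by rewrite walk_step_conn_set sumr_const card_S; field. Qed.

Lemma walk_step_dipole_tail (x u w : Z) :
  walk_step S (fun u _ => dipole x u) u w = - dipole x w.
Proof.
have ub : u - b = u - - a + L by rewrite b_eq opprB oppL opprK addrA.
have unb : u - - b = u - a + L by rewrite opprK b_eq addrCA addrC.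
by rewrite walk_step_conn_set sum_conn_set ub unb !dipole_addL; ring.
Qed.

Lemma walk_step_amp (x : Z) (t : nat) (u w : Z) :
  w - u \in S -> walk_step S (amp x t) u w = amp x t.+1 u w.
Proof.
move=> Suw; rewrite /amp walk_stepZD walk_step_front //= uphalf_half.
case: (odd t); rewrite ?walk_step_dipole_head ?walk_step_dipole_tail //= exprS; ring.
Qed.

Lemma amp0 (x u w : Z) : amp x 0 u w = 2^-1 * (w == x)%:R.
Proof.
rewrite /amp /front /dipole /= mulr0n expr0 mul1r double_sub_eq0.
by case: (w =P x) => [->|_]; rewrite ?eq_addL /=; [|case: (w == x + L)]; field.
Qed.

Lemma dstar_e_conn_set (x : Z) : dstar_e S x = arcfun S (fun u w => 2^-1 * (w == x)%:R).
Proof. by rewrite dstar_eE card_S (_ : 4%:R = 2 ^+ 2 :> algC) ?sqrCK ?ler0n // -natrX. Qed.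

Lemma iter_Uact_dstar_e (x : Z) (t : nat) :
  iter t (@Uact _ S) (dstar_e S x) = arcfun S (amp x t).
Proof.
elim: t => [|t IH]; first by rewrite dstar_e_conn_set; apply: eq_arcfun => u w _; rewrite amp0.
rewrite iterS IH Uact_arcfun; last exact: conn_set_sym.
by apply: eq_arcfun => u w; apply: walk_step_amp.
Qed.

Lemma amp_antipodal (x : Z) (t : nat) (u w : Z) :
  ~~ odd t -> odd t./2 -> A *+ t = 0 -> w - u \in S ->
  amp x t u w = 2^-1 * (w == x + L)%:R.
Proof.
move=> t_even half_odd At Suw.
rewrite /amp /front /dipole (negbTE t_even) -signr_odd half_odd expr1.
have -> : (w - u) *+ 2 *+ t = 0.
  by case: (double_conn_set Suw) => ->; rewrite ?mulNrn At ?oppr0.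
rewrite double_sub_eq0.
by case: (w =P x) => [->|_]; rewrite ?eq_addL /=; [|case: (w == x + L)]; field.
Qed.

Lemma amp_into_antipode (x : Z) (t : nat) :
  amp x t (x + L - a) (x + L) =
  4^-1 * ((A *+ t == 0)%:R - (~~ odd t)%:R * (-1) ^+ t./2).
Proof.
have [a_na b_nb] := conn_set_neq.
have u_x : (x + L - a == x) = false.
  rewrite -addrA -b_eq -{2}(addr0 x) (inj_eq (addrI x)).
  by apply: contraNF b_nb => /eqP ->; rewrite oppr0.
have u_xL : (x + L - a == x + L) = false.
  rewrite -{2}(addr0 (x + L)) (inj_eq (addrI _)) oppr_eq0.
  by apply: contraNF a_na => /eqP ->; rewrite oppr0.
have xLx : x + L - x = L by rewrite addrC addKr.
rewrite /amp /front /dipole subKr xLx mulr2n addLL eq_sym.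
case: (odd t) => /=; first by rewrite u_x u_xL /=; ring.
by rewrite [x + L == x]eq_sym eq_addL eqxx /=; ring.
Qed.

Lemma PST_antipodal (x : Z) (t : nat) :
  ~~ odd t -> odd t./2 -> A *+ t = 0 -> (0 < t)%N ->
  PST (dstar_e S x) (dstar_e S (x + L)) t.
Proof.
move=> t_even half_odd At t_gt0; split; last split => //.
  have S_neq0 : S != set0 by apply/set0Pn; exists a; rewrite in_conn_set eqxx.
  by move/(dstar_e_inj S_neq0)/eqP; rewrite eq_addL.
exists 1; split; first exact: normr1.
rewrite iter_Uact_dstar_e dstar_e_conn_set; apply/ffunP => e; rewrite !ffunE mul1r.
by apply: amp_antipodal => //; exact: (valP e).
Qed.

Lemma PST_antipodal_necessary (x : Z) (t : nat) :
  PST (dstar_e S x) (dstar_e S (x + L)) t -> ~~ odd t /\ A *+ t = 0.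
Proof.
case=> _ [_ [g [g1]]]; rewrite iter_Uact_dstar_e dstar_e_conn_set => /ffunP.
have Sa : x + L - (x + L - a) \in S by rewrite subKr in_conn_set eqxx.
move/(_ (Sub (x + L - a, x + L) Sa)); rewrite !ffunE /= eqxx mulr1 amp_into_antipode => amp_g.
have X_g : (A *+ t == 0)%:R - (~~ odd t)%:R * (-1) ^+ t./2 = 2 * g :> algC.
  by apply: (mulfI (_ : 4^-1 != 0)); rewrite ?amp_g ?invr_eq0 ?pnatr_eq0 //; field.
have := congr1 Num.norm X_g; rewrite normrM g1 mulr1 normr_nat.
have [->|_] := eqVneq (A *+ t) 0; case: (odd t); rewrite -signr_odd; case: (odd t./2) => //=.
all: rewrite ?mul0r ?mul1r ?expr1 ?expr0 ?subr0 ?sub0r ?opprK ?normrN ?normr1 ?normr0 => /eqP.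
all: by rewrite eq_sym ?pnatr_eq0 ?pnatr_eq1.
Qed.

Lemma connected_period (t : nat) : circ_connected S -> A *+ t = 0 -> (l %| t)%N.
Proof.
move=> conn At.
(* Steps double to [A] or [- A], so [z *+ (2 * t)] is constant along the graph. *)
have closed_t : closed (fun u v : Z => v - u \in S) [pred z : Z | z *+ (2 * t) == 0].
  move=> u v Suv; rewrite !inE -[v](subrK u) mulrnDl mulrnA.
  by case: (double_conn_set Suv) => ->; rewrite ?mulNrn At ?oppr0 add0r.
have := closed_connect closed_t (conn 0 1); rewrite !inE mul0rn eqxx => /esym.
by rewrite Zp2l_natr_eq0 // dvdn_pmul2l.
Qed.

End AntipodalTransfer.

Theorem lemma8p1 (l : nat) (a b : 'Z_(2 * l)) :
  (2 <= l)%N ->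
  #|conn_set a b| = 4%N ->
  a + b = l%:R ->
  (l %% 4 != 0)%N ->
  ((l %% 4 = 2)%N ->
     forall x : 'Z_(2 * l),
       PST (dstar_e (conn_set a b) x) (dstar_e (conn_set a b) (x + l%:R)) l) /\
  (odd l ->
     forall x : 'Z_(2 * l),
       PST (dstar_e (conn_set a b) x) (dstar_e (conn_set a b) (x + l%:R)) (2 * l)) /\
  (circ_connected (conn_set a b) ->
     ((l %% 4 = 2)%N ->
        forall (x : 'Z_(2 * l)) (tau : nat),
          PST (dstar_e (conn_set a b) x) (dstar_e (conn_set a b) (x + l%:R)) tau ->
          (l <= tau)%N) /\
     (odd l ->
        forall (x : 'Z_(2 * l)) (tau : nat),
          PST (dstar_e (conn_set a b) x) (dstar_e (conn_set a b) (x + l%:R)) tau ->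
          (2 * l <= tau)%N)).
Proof.
move=> l_ge2 card_S ab_L _; have l_gt0 : (0 < l)%N by lia.
have PST_suff := PST_antipodal l_gt0 card_S ab_L.
have PST_nec := PST_antipodal_necessary l_gt0 card_S ab_L.
have A_l : a *+ 2 *+ l = 0 by rewrite -mulrnA Zp2l_mulrn_eq0.
split; [|split].
- by move=> l_4 x; apply: PST_suff; [lia | lia | | lia].
- move=> l_odd x; apply: PST_suff; [lia | lia | | lia].
  by rewrite mulrnAC Zp2l_mulrn_eq0 ?mul0rn.
move=> conn; split=> [l_4 | l_odd] x t PST_t.
all: have [t_even At] := PST_nec x t PST_t; have t_gt0 := PST_t.2.1.
all: have l_t := connected_period l_gt0 ab_L conn At.
  exact: dvdn_leq.
by apply: dvdn_leq; rewrite // Gauss_dvd ?coprime2n // dvdn2 t_even.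
Qed.
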